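(* Let $\Omega$ be a Cantor group with identity $e$ and let $T$ be a minimal translation of $\Omega$. For $f\in C(\Omega,\mathbb{R})$ let $F(\omega)=(f(T^n(\omega)))_{n\in\mathbb{Z}}\in\ell^\infty(\mathbb{Z})$. Then for every $f\in C(\Omega,\mathbb{R})$, $\mathrm{hull}(F(e))$ is (isomorphic as a topological group to) a quotient group of $\Omega$ by a closed subgroup.
   Context: A Cantor group is a totally disconnected compact abelian topological group without isolated points. A translation of a topological group $\Omega$ is a map $T(\omega)=\omega\cdot\omega_0$ for some fixed $\omega_0\in\Omega$; it is minimal if $\{T^n(\omega):n\in\mathbb{Z}\}$ is dense in $\Omega$ for every $\omega$. $\sigma$ is the left shift on $\ell^\infty(\mathbb{Z})$ (sup norm), $(\sigma d)_n=d_{n+1}$, and $\mathrm{hull}(d)$ is the closure of $\{\sigma^k d:k\in\mathbb{Z}\}$. In this setting $F(e)$ is limit-periodic (a uniform limit of periodic sequences), and for a limit-periodic $d$, $\mathrm{hull}(d)$ carries a unique topological group structure with identity $d$ such that $k\mapsto\sigma^k(d)$ is a homomorphism; this is the group structure on $\mathrm{hull}(F(e))$. *)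

From HB Require Import structures.
From mathcomp Require Import all_boot all_order all_algebra.
From mathcomp Require Import all_classical all_reals all_analysis.
Set Implicit Arguments. Unset Strict Implicit. Unset Printing Implicit Defensive.
Import Order.TTheory GRing.Theory Num.Theory.
Local Open Scope classical_set_scope.
Local Open Scope ring_scope.

(* A Cantor group: totally disconnected compact abelian topological group
   without isolated points.  The abelian group is written additively
   (topologicalZmodType = topological abelian group). *)
Definition cantor_group (O : topologicalZmodType) : Prop :=
  [/\ compact [set: O], totally_disconnected [set: O]
    & forall x : O, ~ isolated [set: O] x].

Definition transl_pow (O : zmodType) (w0 : O) (n : int) (w : O) : O :=
  w + w0 *~ n.

Definition minimal_translation (O : topologicalZmodType) (w0 : O) : Prop :=
  forall w : O, closure (range (fun n : int => transl_pow w0 n w)) = [set: O].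

Definition orbit_seq (O : zmodType) (R : realType) (f : O -> R) (w0 : O)
  (w : O) : int -> R := fun n => f (transl_pow w0 n w).

Definition lshift (R : realType) (k : int) (d : int -> R) : int -> R :=
  fun n => d (n + k).

Definition linf_close (R : realType) (x y : int -> R) (eps : R) : Prop :=
  forall n, `|x n - y n| <= eps.

Definition linf_bounded (R : realType) (x : int -> R) : Prop :=
  exists M : R, forall n, `|x n| <= M.

(* hull(d): closure in l^infty(Z) (sup norm) of {sigma^k d : k in Z} *)
Definition hull (R : realType) (d : int -> R) : set (int -> R) :=
  [set x | linf_bounded x /\
     forall eps : R, 0 < eps -> exists k : int, linf_close x (lshift k d) eps].

Definition hull_open (R : realType) (d : int -> R) (U : set (int -> R)) : Prop :=
  U `<=` hull d /\
  forall x, U x -> exists2 eps : R, 0 < eps &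
     forall y, hull d y -> linf_close x y eps -> U y.

(* (op, inv) is a topological group structure on hull(d) with identity d
   such that k |-> sigma^k d is a homomorphism (Z,+) -> hull(d). *)
Definition hull_group_structure (R : realType) (d : int -> R)
  (op : (int -> R) -> (int -> R) -> (int -> R)) (inv : (int -> R) -> (int -> R))
  : Prop :=
  [/\ (forall x y, hull d x -> hull d y -> hull d (op x y)),
      (forall x, hull d x -> hull d (inv x)),
      (forall x y z, hull d x -> hull d y -> hull d z ->
          op x (op y z) = op (op x y) z),
      (forall x, hull d x -> op d x = x /\ op x d = x) &
      (forall x, hull d x -> op (inv x) x = d /\ op x (inv x) = d)] /\
  [/\
      (forall x y eps, hull d x -> hull d y -> 0 < eps ->
          exists2 del : R, 0 < del & forall x' y', hull d x' -> hull d y' ->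
            linf_close x x' del -> linf_close y y' del ->
            linf_close (op x y) (op x' y') eps),
      (forall x eps, hull d x -> 0 < eps ->
          exists2 del : R, 0 < del & forall x', hull d x' ->
            linf_close x x' del -> linf_close (inv x) (inv x') eps) &
      (forall j k : int, op (lshift j d) (lshift k d) = lshift (j + k) d)].

From Pilot Require Import Defs.
From HB Require Import structures.
From mathcomp Require Import all_boot all_order all_algebra.
From mathcomp Require Import all_classical all_reals all_analysis.
Import Order.TTheory GRing.Theory Num.Theory numFieldTopology.Exports numFieldNormedType.Exports.
Local Open Scope classical_set_scope.
Local Open Scope ring_scope.

(* The orbit map [psi w = (f (w + n w0))_n] is continuous into l^oo(Z) because f
   is uniformly continuous on the compact group, and it sends [k w0] to the k-th
   shift of [d = psi 0].  As the multiples of [w0] are dense, [psi] maps onto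
   a dense subset of hull(d), hence, by compactness, onto hull(d), and the hull
   carries the quotient topology.  On the multiples of [w0] the group law of the
   hull is prescribed, so [psi] is a morphism by continuity; its kernel is the
   closed subgroup of periods of f. *)

Lemma compact_nested_cluster (R : realDomainType) (T : topologicalType)
    (P : R -> set T) : compact [set: T] ->
  (forall e, 0 < e -> P e !=set0) ->
  (forall e1 e2, 0 < e1 -> e1 <= e2 -> P e1 `<=` P e2) ->
  exists b, forall e, 0 < e -> closure (P e) b.
Proof.
move=> cptT Pn0 Pmono.
pose F := filter_from [set e : R | 0 < e] P.
have FF : ProperFilter F.
  apply: filter_from_proper => [|e /Pn0//].
  apply: filter_from_filter; first by exists 1; rewrite /= ltr01.
  move=> i j /= i0 j0; have m0 : 0 < Num.min i j by rewrite lt_min i0.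
  exists (Num.min i j) => // x Px.
  by split; apply: (Pmono _ _ m0 _ _ Px); rewrite ge_min lexx ?orbT.
have [b [_ Fb]] := cptT F FF filterT.
by exists b => e e0 B Bb; apply: Fb Bb; exists e.
Qed.

Lemma distr_le_eq (R : numFieldType) (u v : R) :
  (forall e, 0 < e -> `|u - v| <= e) -> u = v.
Proof.
move=> uv; apply/eqP; rewrite -subr_eq0 -normr_le0.
by apply/ler_addgt0Pr => e e0; rewrite add0r; exact: uv.
Qed.

Section TopologicalZmodule.
Context {O : topologicalZmodType}.

Lemma addl_continuous (a : O) : continuous (+%R a).
Proof.
move=> z; apply: (@continuous_comp _ _ _ (pair a) (fun x : O * O => x.1 + x.2)).
  by apply: cvg_pair; [exact: cvg_cst | exact: cvg_id].
exact: add_continuous.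
Qed.

Lemma nbhs0_subr (b : O) (V : set O) : nbhs 0 V -> nbhs b (fun c => V (c - b)).
Proof.
move=> V0; have : nbhs b (+%R (- b) @^-1` V) by apply: addl_continuous; rewrite addNr.
by apply: filterS => c /=; rewrite addrC.
Qed.

Lemma unif_continuous_translate {R : realType} {f : O -> R} :
  compact [set: O] -> continuous f ->
  forall e, 0 < e -> \forall v \near 0, forall x, `|f (x + v) - f x| < e.
Proof.
move=> cptO fc e e0.
have cover x : [set: O] x -> \forall x' \near x & v \near 0, `|f (x' + v) - f x'| < e.
  move=> _; have : (fun p : O * O => f (p.1 + p.2) - f p.1) @ (x, 0) --> f (x + 0) - f x.
    by apply: cvgB; apply: continuous_comp; [exact: add_continuous | exact: fc |
                                             exact: cvg_fst | exact: fc].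
  by rewrite addr0 subrr => /cvgr0Pnorm_lt /(_ e e0).
have := proj1 (compact_near_coveringP [set: O]) cptO O (nbhs 0)
  (fun v x => `|f (x + v) - f x| < e) (nbhs_filter _) cover.
by apply: filterS => v fv x; exact: fv.
Qed.

Definition periods {T : Type} (f : O -> T) := [set c : O | forall y, f (c + y) = f y].

Lemma periods0 (T : Type) (f : O -> T) : periods f 0.
Proof. by move=> y; rewrite add0r. Qed.

Lemma periodsB (T : Type) (f : O -> T) a b :
  periods f a -> periods f b -> periods f (a - b).
Proof. by move=> fa fb y; rewrite -addrA fa -{1}(fb (- b + y)) addNKr. Qed.

Lemma closed_periods (R : realType) (f : O -> R) : continuous f -> closed (periods f).
Proof.
move=> fc c clc y; apply: distr_le_eq => e e0.
have /cvgrPdist_lt /(_ _ e0) fyc := continuous_comp (addl_continuous y c) (fc _).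
have [t [ft /= fyt]] := clc _ fyc.
by rewrite -(ft y) [c + y]addrC [t + y]addrC ltW.
Qed.

End TopologicalZmodule.

Section SupNorm.
Context {R : realType}.

Lemma linf_close_refl (x : int -> R) e : 0 <= e -> linf_close x x e.
Proof. by move=> e0 n; rewrite subrr normr0. Qed.

Lemma linf_closeC {x y : int -> R} {e : R} : linf_close x y e -> linf_close y x e.
Proof. by move=> xy n; rewrite distrC. Qed.

Lemma linf_close_trans {x y z : int -> R} {e1 e2 : R} :
  linf_close x y e1 -> linf_close y z e2 -> linf_close x z (e1 + e2).
Proof. by move=> xy yz n; apply: le_trans (ler_distD (y n) _ _) _; rewrite lerD. Qed.

Lemma linf_close_le {x y : int -> R} {e1 e2 : R} :
  e1 <= e2 -> linf_close x y e1 -> linf_close x y e2.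
Proof. by move=> e12 xy n; apply: le_trans e12. Qed.

Lemma linf_close_eq (x y : int -> R) : (forall e, 0 < e -> linf_close x y e) -> x = y.
Proof. by move=> xy; apply/funext => n; apply: distr_le_eq => e /xy. Qed.

Context {O : topologicalZmodType}.

Definition linf_continuous (g : O -> int -> R) :=
  forall c e, 0 < e -> \forall c' \near c, linf_close (g c) (g c') e.

Lemma linf_continuous_cst (y : int -> R) : linf_continuous (fun=> y).
Proof. by move=> c e /ltW e0; apply: nearW => c'; exact: linf_close_refl. Qed.

Lemma linf_continuous_addl (g : O -> int -> R) b :
  linf_continuous g -> linf_continuous (fun a => g (b + a)).
Proof. by move=> gc a e /(gc (b + a)); apply: addl_continuous. Qed.

Lemma linf_continuous_coord {g : O -> int -> R} :
  linf_continuous g -> forall n, continuous (fun a => g a n).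
Proof. by move=> gc n a; apply/cvgrPdist_le => e /(gc a); apply: filterS. Qed.

End SupNorm.

Section OrbitMap.
Variables (R : realType) (O : topologicalZmodType) (f : O -> R) (w0 : O).
Hypotheses (cptO : compact [set: O]) (fc : continuous f)
  (minT : minimal_translation w0).

Local Notation psi := (orbit_seq f w0).
Local Notation d := (orbit_seq f w0 0).

Lemma orbit_seq_mulz k : psi (w0 *~ k) = Defs.lshift k d.
Proof.
apply/funext => n; rewrite /orbit_seq /Defs.lshift /transl_pow add0r mulrzDr.
by rewrite addrC.
Qed.

Lemma multiples_dense {a : O} {B : set O} : nbhs a B -> exists k, B (w0 *~ k).
Proof.
move=> Ba; have : closure (range (fun n => transl_pow w0 n 0)) a by rewrite minT.
by move=> /(_ B Ba) [_ [[k _ <-]]]; rewrite /transl_pow add0r; exists k.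
Qed.

Lemma continuous_eq_mulz {g h : O -> R} : continuous g -> continuous h ->
  (forall k, g (w0 *~ k) = h (w0 *~ k)) -> g = h.
Proof.
move=> gc hc gh; apply/funext => a; apply: distr_le_eq => e e0.
have e2 : 0 < e / 2 by rewrite divr_gt0.
have /cvgrPdist_lt /(_ _ e2) ga := gc a.
have /cvgrPdist_lt /(_ _ e2) ha := hc a.
have [k [gk hk]] := multiples_dense (filterI ga ha).
rewrite (splitr e); apply: le_trans (ler_distD (g (w0 *~ k)) _ _) _.
by apply: lerD; [exact: ltW | rewrite gh distrC; exact: ltW].
Qed.

Lemma linf_continuous_eq_mulz {g h : O -> int -> R} :
  linf_continuous g -> linf_continuous h ->
  (forall k, g (w0 *~ k) = h (w0 *~ k)) -> g = h.
Proof.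
move=> gc hc gh; apply/funext => a; apply/funext => n.
have := continuous_eq_mulz (linf_continuous_coord gc n)
  (linf_continuous_coord hc n) (fun k => congr1 (@^~ n) (gh k)).
by move/(congr1 (@^~ a)).
Qed.

Lemma orbit_seq_continuous : linf_continuous psi.
Proof.
move=> c e e0; have /(nbhs0_subr c) := unif_continuous_translate cptO fc _ e0.
apply: filterS => c' fc' n; rewrite /orbit_seq /transl_pow distrC.
have -> : c' + w0 *~ n = c + w0 *~ n + (c' - c) by rewrite addrAC [c + _]addrC subrK.
exact/ltW/fc'.
Qed.

Lemma orbit_seq_bounded a : linf_bounded (psi a).
Proof.
have /compact_bounded [M [_ fM]] : compact (f @` [set: O]).
  by apply: continuous_compact => //; exact: continuous_subspaceT.
by exists (M + 1) => n; apply: fM; [rewrite ltrDl | exists (a + w0 *~ n)].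
Qed.

Lemma orbit_seq_hull a : hull d (psi a).
Proof.
split=> [|e e0]; first exact: orbit_seq_bounded.
have [k ak] := multiples_dense (orbit_seq_continuous a _ e0).
by exists k; rewrite -orbit_seq_mulz.
Qed.

Lemma orbit_seq_cluster (Q : set O) x :
  (forall e, 0 < e -> exists2 c, Q c & linf_close x (psi c) e) ->
  exists2 b, psi b = x & closure Q b.
Proof.
move=> Qx; pose P e := Q `&` [set c | linf_close x (psi c) e].
have [||b Pb] := @compact_nested_cluster R O P cptO.
- by move=> e /Qx [c Qc xc]; exists c.
- by move=> e1 e2 _ e12 c [Qc xc]; split=> //; exact: linf_close_le e12 xc.
exists b; last by apply: closureS (Pb 1 ltr01) => c [].
apply: linf_close_eq => e e0; have e2 : 0 < e / 2 by rewrite divr_gt0.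
have [c [[_ xc] bc]] := Pb _ e2 _ (orbit_seq_continuous b _ e2).
by rewrite (splitr e); exact: linf_close_trans bc (linf_closeC xc).
Qed.

Lemma orbit_seq_surj x : hull d x -> exists a, psi a = x.
Proof.
move=> [_ dx]; have [|b bx _] := @orbit_seq_cluster setT x; last by exists b.
by move=> e /dx [k xk]; exists (w0 *~ k); rewrite // orbit_seq_mulz.
Qed.

Lemma orbit_seq_eqP a b : psi a = psi b <-> periods f (a - b).
Proof.
split=> [ab y|fab]; last first.
  apply/funext => n; rewrite /orbit_seq /transl_pow -(subrK b a) -addrA.
  exact: fab.
have fab : (fun z => f (a + z)) = (fun z => f (b + z)).
  apply: continuous_eq_mulz => [z|z|k]; last by have := congr1 (@^~ k) ab.
    exact: continuous_comp (addl_continuous a z) (fc _).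
  exact: continuous_comp (addl_continuous b z) (fc _).
by rewrite -addrA (congr1 (@^~ (- b + y)) fab) addNKr.
Qed.

(* The law [op] is prescribed on the shifts, i.e. on [psi] of the dense subgroup
   generated by [w0]; separate continuity extends the morphism law variable by
   variable. *)
Lemma orbit_seq_morph op inv : hull_group_structure d op inv ->
  {morph psi : a b / a + b >-> op a b}.
Proof.
move=> [_ [op_cont _ op_lshift]].
have op_continuous (g h : O -> int -> R) : linf_continuous g -> linf_continuous h ->
    (forall a, hull d (g a)) -> (forall a, hull d (h a)) ->
    linf_continuous (fun a => op (g a) (h a)).
  move=> gc hc dg dh a e e0; have [del del0 opd] := op_cont _ _ _ (dg a) (dh a) e0.
  by apply: filterS2 (gc a _ del0) (hc a _ del0) => c; apply: opd.
have mulz_morph j : (fun b => psi (w0 *~ j + b)) = (fun b => op (psi (w0 *~ j)) (psi b)).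
  apply: linf_continuous_eq_mulz => [||k].
  - exact/linf_continuous_addl/orbit_seq_continuous.
  - exact: (op_continuous _ _ (linf_continuous_cst _) orbit_seq_continuous
                          (fun=> orbit_seq_hull _) orbit_seq_hull).
  - by rewrite -mulrzDr !orbit_seq_mulz op_lshift.
move=> a b; rewrite addrC.
suff fg : (fun a => psi (b + a)) = (fun a => op (psi a) (psi b)).
  by have := congr1 (@^~ a) fg.
apply: linf_continuous_eq_mulz => [||j].
- exact/linf_continuous_addl/orbit_seq_continuous.
- exact: (op_continuous _ _ orbit_seq_continuous (linf_continuous_cst _)
                        orbit_seq_hull (fun=> orbit_seq_hull _)).
- by rewrite addrC (congr1 (@^~ b) (mulz_morph j)).
Qed.

Lemma orbit_seq_hull_open U :
  U `<=` hull d -> hull_open d U <-> open (psi @^-1` U).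
Proof.
move=> Ud; split=> [[_ Uo]|psiUo].
  rewrite openE => a Ua; have [e e0 Ue] := Uo _ Ua.
  by apply: filterS (orbit_seq_continuous a _ e0) => c; apply: Ue (orbit_seq_hull c).
(* Hull points outside [U] accumulating at [x] lift, by compactness, to points
   outside [psi @^-1` U] accumulating at a preimage of [x]. *)
split=> // x Ux; apply: contrapT => Ux_not_interior.
have [|b bx Ucb] := @orbit_seq_cluster (~` (psi @^-1` U)) x.
  move=> e e0; apply: contrapT => Ue; apply: Ux_not_interior; exists e => // y dy xy.
  have [c cy] := orbit_seq_surj _ dy; apply: contrapT => Uy.
  by apply: Ue; exists c; rewrite /= cy.
have Ub : (psi @^-1` U) b by rewrite /= bx.
by move: psiUo; rewrite openE => /(_ b Ub) /Ucb [c []].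
Qed.

End OrbitMap.

Theorem lemma4p2 (R : realType) (O : topologicalZmodType) (w0 : O)
  (f : O -> R)
  (op : (int -> R) -> (int -> R) -> (int -> R)) (inv : (int -> R) -> (int -> R)) :
  cantor_group O -> minimal_translation w0 -> continuous f ->
  hull_group_structure (orbit_seq f w0 0) op inv ->
  exists H : set O,
    [/\ closed H, H 0, (forall a b, H a -> H b -> H (a - b)) &
      exists psi : O -> (int -> R),
        [/\ (forall a, hull (orbit_seq f w0 0) (psi a)),
            (forall x, hull (orbit_seq f w0 0) x -> exists a, psi a = x),
            (forall a b, psi (a + b) = op (psi a) (psi b)),
            (forall a b, psi a = psi b <-> H (a - b)) &
            (forall U, U `<=` hull (orbit_seq f w0 0) ->
               (hull_open (orbit_seq f w0 0) U <-> open (psi @^-1` U)))]].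
Proof.
move=> [cptO _ _] minT fc hull_op.
exists (periods f); split.
- exact: closed_periods.
- exact: periods0.
- exact: periodsB.
exists (orbit_seq f w0); split.
- exact: orbit_seq_hull.
- exact: orbit_seq_surj.
- exact: orbit_seq_morph hull_op.
- exact: orbit_seq_eqP.
- exact: orbit_seq_hull_open.
Qed.
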